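(* Let $K$ be a field, let $L$ be a finite lattice, and let $R=H[L]=K[L]/I_L$. The following statements are equivalent: (1) $L$ is distributive; (2) the set of all poset ideals of $R$ forms a Koszul filtration of $R$; (3) $R$ admits a Koszul filtration in which every ideal is a poset ideal of $R$.
   Context: $K[L]$ denotes the polynomial ring over $K$ whose variables are the elements of $L$. For incomparable $a,b\in L$, the binomial $ab-(a\vee b)(a\wedge b)$ is called a basic binomial (Hibi relation); $I_L$ is the ideal of $K[L]$ generated by all basic binomials, and $H[L]=K[L]/I_L$. $H[L]$ is standard graded with $\deg(a)=1$ for each $a\in L$. A subset $J\subseteq L$ is a poset ideal of $L$ if $a\le b$ and $b\in J$ imply $a\in J$. For a poset ideal $J$ of $L$, $(\overline{J})$ denotes the ideal of $H[L]$ generated by the residue classes $\overline{a}=a+I_L$, $a\in J$; ideals of this form are called poset ideals of $H[L]$. For a standard graded $K$-algebra $R$ with maximal graded ideal $\mathfrak m$, a collection $\mathcal F$ of ideals of $R$ is a Koszul filtration if: (i) every ideal in $\mathcal F$ is generated by linear forms; (ii) $0$ and $\mathfrak m$ belong to $\mathcal F$; (iii) for every ideal $0\ne I\in\mathcal F$ there exists $J\in\mathcal F$ with $J\subset I$, $I/J$ cyclic, and $J:I\in\mathcal F$. *)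

From HB Require Import structures.
From mathcomp Require Import all_boot all_order all_algebra.
From mathcomp Require Import mpoly.

Set Implicit Arguments.
Unset Strict Implicit.
Unset Printing Implicit Defensive.

Import Order.TTheory GRing.Theory.
Local Open Scope ring_scope.
Local Open Scope order_scope.

Definition distributive_lattice (d : Order.disp_t) (L : latticeType d) : Prop :=
  forall x y z : L, Order.meet x (Order.join y z)
                    = Order.join (Order.meet x y) (Order.meet x z).

Section HibiRing.
Variables (K : fieldType) (d : Order.disp_t) (L : finLatticeType d).

Definition KL := {mpoly K[#|L|]}.

Definition var (a : L) : KL := 'X_(enum_rank a).

Definition ideal_gen (S : KL -> Prop) : KL -> Prop :=
  fun f => exists (m : nat) (r s : 'I_m -> KL),
      (forall i, S (s i)) /\ f = \sum_(i < m) r i * s i.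

Definition basic_binomial (f : KL) : Prop :=
  exists a b : L, ~~ (a >=< b) /\
    f = var a * var b - var (Order.join a b) * var (Order.meet a b).

Definition I_L : KL -> Prop := ideal_gen basic_binomial.

(** Ideals of H[L] = K[L]/I_L are represented by their preimages in K[L]
    (correspondence theorem): an ideal of K[L] containing I_L.
    The ideal of H[L] generated by the residue classes of a set S of
    polynomials has preimage the ideal of K[L] generated by I_L and S. *)
Definition genR (S : KL -> Prop) : KL -> Prop :=
  ideal_gen (fun f => I_L f \/ S f).

Definition same (I J : KL -> Prop) : Prop := forall f, I f <-> J f.

Definition linear_form (f : KL) : Prop :=
  exists c : L -> K, f = \sum_(a : L) c a *: var a.

Definition gen_by_linear_forms (I : KL -> Prop) : Prop :=
  exists S : KL -> Prop, (forall f, S f -> linear_form f) /\ same I (genR S).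

Definition zeroR : KL -> Prop := genR (fun _ => False).
Definition maxR : KL -> Prop := genR (fun f => exists a : L, f = var a).

Definition colon (J I : KL -> Prop) : KL -> Prop :=
  fun f => forall g, I g -> J (f * g).

Definition cyclic_quot (I J : KL -> Prop) : Prop :=
  exists g, I g /\ same I (genR (fun f => J f \/ f = g)).

Definition inF (F : (KL -> Prop) -> Prop) (I : KL -> Prop) : Prop :=
  exists C, F C /\ same C I.

Definition koszul_filtration (F : (KL -> Prop) -> Prop) : Prop :=
  [/\ (forall I, F I -> gen_by_linear_forms I),
      inF F zeroR /\ inF F maxR &
      (forall I, F I -> ~ same I zeroR ->
         exists J, F J /\ (forall f, J f -> I f) /\
                   cyclic_quot I J /\ inF F (colon J I))].

Definition poset_ideal (J : {set L}) : Prop :=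
  forall a b : L, a <= b -> b \in J -> a \in J.

Definition poset_idealR (J : {set L}) : KL -> Prop :=
  genR (fun f => exists2 a, a \in J & f = var a).

Definition all_poset_idealsR : (KL -> Prop) -> Prop :=
  fun I => exists J, poset_ideal J /\ same I (poset_idealR J).

End HibiRing.

(* Distributive => poset ideals form a Koszul filtration: for a maximal
   element [a] of a poset ideal [J], (J) = (J \ a) + (x_a), and the colon
   (J \ a) : (J) is the poset ideal of the elements not above [a].  The
   nontrivial inclusion says that x_a is a nonzerodivisor modulo that ideal;
   this holds because, for distributive [L], the Hibi ring of the interval
   [a, 1] embeds into a polynomial ring via the join-prime elements, and the
   straightened (chain) monomials have distinct images.

   Poset Koszul filtration => distributive: a cancellative lattice
   (u `&` w = v `&` w and u `|` w = v `|` w force u = v) contains no M3 or N5,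
   hence is distributive.  If u <> v violate cancellation, put o = u `&` w,
   t = u `|` w and f = x_t (x_u - x_v); then f x_o lies in I_L but f does not
   lie in the ideal of the elements not above [o].  Descending the filtration
   from the maximal ideal, [o] stays in the poset ideal until the step that
   removes it; there the cyclic quotient condition forces the removed set to
   be {o}, so f lies in the colon ideal, a poset ideal of elements not above
   [o]: a contradiction. *)

From HB Require Import structures.
From mathcomp Require Import all_boot all_order all_algebra.
From mathcomp Require Import mpoly ring.

Set Implicit Arguments.
Unset Strict Implicit.
Unset Printing Implicit Defensive.

Import Order.TTheory GRing.Theory.

Local Open Scope order_scope.

(** * Lattice theory *)

(* Bounded search for a proof of [x <= y] between lattice terms, from the
   defining inequalities of meets and joins and the hypotheses in context. *)
Ltac lattice_le_depth n :=
  lazymatch n with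
  | O => fail
  | S ?m =>
  lazymatch goal with
  | |- is_true (Order.le (Order.join _ _) _) =>
      rewrite leUx; apply/andP; split; lattice_le_depth n
  | |- is_true (Order.le _ (Order.meet _ _)) =>
      rewrite lexI; apply/andP; split; lattice_le_depth n
  | |- _ =>
      first [ exact: lexx | assumption
            | apply: (le_trans (leIl _ _)); lattice_le_depth m
            | apply: (le_trans (leIr _ _)); lattice_le_depth m
            | apply: (le_trans _ (leUl _ _)); lattice_le_depth m
            | apply: (le_trans _ (leUr _ _)); lattice_le_depth m
            | match goal with H : is_true (Order.le ?a ?b) |- is_true (Order.le ?a _) =>
                apply: (le_trans H); lattice_le_depth m end ]
  end end.
Ltac lattice_le := lattice_le_depth 6.
Ltac lattice_eq := apply/le_anti/andP; split; lattice_le.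

Section Cancellative.
Variables (disp : Order.disp_t) (T : latticeType disp).
Implicit Types a b c x y z : T.

Definition cancellative := forall x y z,
  x `&` z = y `&` z -> x `|` z = y `|` z -> x = y.

Definition modular := forall a b c, a <= c -> a `|` (b `&` c) = (a `|` b) `&` c.

Definition lower_median x y z := (x `&` y) `|` (y `&` z) `|` (z `&` x).
Definition upper_median x y z := (x `|` y) `&` (y `|` z) `&` (z `|` x).

Lemma lower_medianC x y z : lower_median x y z = lower_median x z y.
Proof. by rewrite /lower_median; lattice_eq. Qed.

Lemma lower_median_rot x y z : lower_median x y z = lower_median y z x.
Proof. by rewrite /lower_median; lattice_eq. Qed.

Lemma upper_medianC x y z : upper_median x y z = upper_median x z y.
Proof. by rewrite /upper_median; lattice_eq. Qed.

Lemma upper_median_rot x y z : upper_median x y z = upper_median y z x.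
Proof. by rewrite /upper_median; lattice_eq. Qed.

Lemma cancellative_modular : cancellative -> modular.
Proof.
move=> canc a b c ac.
have le_ab_c : a `|` (b `&` c) <= (a `|` b) `&` c by lattice_le.
by apply: (canc _ _ b); lattice_eq.
Qed.

Section Modular.
Hypothesis modT : modular.
Variables x y z : T.
Let d := lower_median x y z.
Let e := upper_median x y z.

(* The elements [(x `&` e) `|` d], [(y `&` e) `|` d], [(z `&` e) `|` d]
   pairwise meet to [d] and join to [e]: a copy of M3 unless [d = e]. *)
Lemma median_meet : ((x `&` e) `|` d) `&` ((y `&` e) `|` d) = d.
Proof.
set y1 := (y `&` e) `|` d.
have d_y1 : d <= y1 by rewrite /y1; lattice_le.
have y1_le : y1 <= y `|` (z `&` x) by rewrite /y1 /d /lower_median; lattice_le.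
rewrite joinC meetC [y1 `&` _]meetC -modT //.
apply: join_l.
apply: (@le_trans _ _ (x `&` (y `|` (z `&` x)))); first by rewrite leI2 // leIl.
have -> : x `&` (y `|` (z `&` x)) = (z `&` x) `|` (y `&` x).
  by rewrite meetC joinC -modT // leIr.
by rewrite /d /lower_median; lattice_le.
Qed.

Lemma median_join : ((x `&` e) `|` d) `|` ((y `&` e) `|` d) = e.
Proof.
have d_e : d <= e by rewrite /d /e /lower_median /upper_median; lattice_le.
have x1_e : (x `&` e) `|` d <= e by lattice_le.
have xyz_e : x `&` (y `|` z) <= e by rewrite /e /upper_median; lattice_le.
apply/le_anti/andP; split; first by lattice_le.
rewrite [(y `&` e) `|` d]joinC modT // [d `|` y]joinC modT // lexI lexx andbT.
apply: (@le_trans _ _ (y `|` (x `&` (y `|` z)))).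
  by rewrite modT; [rewrite /e /upper_median; lattice_le | lattice_le].
by rewrite joinC leU2 //; lattice_le.
Qed.

End Modular.

Lemma cancellative_median_eq : cancellative ->
  forall x y z, lower_median x y z = upper_median x y z.
Proof.
move=> canc x y z; have modT := cancellative_modular canc.
set d := lower_median x y z; set e := upper_median x y z.
set x1 := (x `&` e) `|` d; set y1 := (y `&` e) `|` d; set z1 := (z `&` e) `|` d.
have x1_z1_meet : x1 `&` z1 = d.
  by rewrite /x1 /z1 /d /e lower_medianC upper_medianC median_meet.
have y1_z1_meet : y1 `&` z1 = d.
  by rewrite /y1 /z1 /d /e lower_median_rot upper_median_rot median_meet.
have x1_z1_join : x1 `|` z1 = e.
  by rewrite /x1 /z1 /d /e lower_medianC upper_medianC median_join.
have y1_z1_join : y1 `|` z1 = e.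
  by rewrite /y1 /z1 /d /e lower_median_rot upper_median_rot median_join.
have x1y1 : x1 = y1.
  by apply: (canc _ _ z1); rewrite ?x1_z1_meet ?y1_z1_meet ?x1_z1_join ?y1_z1_join.
have x1_y1_meet : x1 `&` y1 = d := median_meet modT x y z.
have x1_y1_join : x1 `|` y1 = e := median_join modT x y z.
by rewrite -x1_y1_meet -x1_y1_join x1y1 meetxx joinxx.
Qed.

Lemma modular_median_distributive : modular ->
  (forall x y z, lower_median x y z = upper_median x y z) -> distributive_lattice T.
Proof.
move=> modT median_eq x y z; apply/le_anti/andP; split; last by lattice_le.
have le_median : x `&` (y `|` z) <= x `&` lower_median x y z.
  by rewrite median_eq /upper_median; lattice_le.
apply: (le_trans le_median).
set a := (x `&` y) `|` (x `&` z).
have a_x : a <= x by rewrite /a; lattice_le.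
apply: (@le_trans _ _ ((a `|` (y `&` z)) `&` x)).
  by rewrite meetC leI2 // /lower_median /a; lattice_le.
by rewrite -modT // /a; lattice_le.
Qed.

Lemma cancellative_distributive : cancellative -> distributive_lattice T.
Proof.
move=> canc; apply: modular_median_distributive (cancellative_modular canc) _.
exact: cancellative_median_eq.
Qed.

End Cancellative.

Section FinitePosets.
Variables (disp : Order.disp_t) (T : finPOrderType disp).

Lemma exists_maximal (A : {set T}) x : x \in A ->
  exists2 a, a \in A & forall b, b \in A -> a <= b -> b = a.
Proof.
move=> xA; case: (@arg_maxnP _ x (mem A) (fun y => #|[set z | z <= y]|) xA).
move=> a aA amax; exists a => // b bA ab.
have sub : [set z | z <= a] \subset [set z | z <= b].
  by apply/subsetP => z; rewrite !inE => za; apply: le_trans za ab.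
have card_eq : #|[set z | z <= a]| = #|[set z | z <= b]|.
  by apply/eqP; rewrite eqn_leq subset_leq_card //; exact: amax.
have /(_ b) := elimT (subset_cardP card_eq) sub.
by rewrite !inE lexx => /idP ba; apply/le_anti; rewrite ab ba.
Qed.
End FinitePosets.

Section JoinPrimes.
Variables (disp : Order.disp_t) (T : finLatticeType disp).
Implicit Types b c p x y : T.

Definition join_prime p := [forall x, forall y, (p <= x `|` y) ==> (p <= x) || (p <= y)].

Lemma join_primeP p x y : join_prime p -> (p <= x `|` y) = (p <= x) || (p <= y).
Proof.
move=> /forallP /(_ x) /forallP /(_ y) /implyP p_prime.
by apply/idP/idP => [/p_prime|/lexU2].
Qed.

Lemma join_prime_le b c : distributive_lattice T ->
  (forall p, join_prime p -> p <= b -> p <= c) -> b <= c.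
Proof.
move=> Tdistr; move Hk : #|[set y | y <= b]| => k.
elim/ltn_ind: k b Hk => k IH b Hk below_b.
have [b_prime|] := boolP (join_prime b); first exact: below_b.
move=> /forallPn [x /forallPn [y]]; rewrite negb_imply negb_or.
move=> /andP[b_xy /andP[b_x b_y]].
have -> : b = (b `&` x) `|` (b `&` y) by rewrite -Tdistr; apply/esym/meet_l.
have below_meet z : ~~ (b <= z) -> b `&` z <= c.
  move=> b_z; apply: (IH _ _ (b `&` z) erefl) => [|p p_prime p_bz].
    rewrite -Hk; apply: proper_card; rewrite properE; apply/andP; split.
      by apply/subsetP => w; rewrite !inE => /le_trans; apply; apply: leIl.
    by apply/subsetP => /(_ b); rewrite !inE lexx lexI lexx (negbTE b_z) => /(_ isT).
  by apply: below_b p_prime (le_trans p_bz (leIl _ _)).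
by rewrite leUx !below_meet.
Qed.

End JoinPrimes.

(** * Ideals of the Hibi ring *)

Section HibiRing.
Variables (K : fieldType) (disp : Order.disp_t) (L : finLatticeType disp).
Local Open Scope ring_scope.
Local Notation KL := (KL K L).
Local Notation var := (@var K disp L).
Local Notation I_L := (@I_L K disp L).
Local Notation genR := (@genR K disp L).
Local Notation P := (@poset_idealR K disp L).
Local Notation zeroR := (@zeroR K disp L).
Implicit Types (f g h r : KL) (S X Y : KL -> Prop) (J : {set L}).

Definition is_ideal X :=
  [/\ X 0, forall f g, X f -> X g -> X (f + g) & forall r f, X f -> X (r * f)].

Section IdealTheory.
Variable X : KL -> Prop.
Hypothesis idealX : is_ideal X.

Lemma is_ideal0 : X 0.
Proof. by case: idealX. Qed.

Lemma is_idealD f g : X f -> X g -> X (f + g).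
Proof. by case: idealX => _ XD _; apply: XD. Qed.

Lemma is_idealMl r f : X f -> X (r * f).
Proof. by case: idealX => _ _ XM; apply: XM. Qed.

Lemma is_idealMr f r : X f -> X (f * r).
Proof. by rewrite mulrC; apply: is_idealMl. Qed.

Lemma is_idealB f g : X f -> X g -> X (f - g).
Proof. by move=> Xf Xg; rewrite -mulN1r; apply/is_idealD/is_idealMl. Qed.

Lemma is_idealZ (c : K) f : X f -> X (c *: f).
Proof. by rewrite -mul_mpolyC; apply: is_idealMl. Qed.

Lemma is_ideal_sum (I : Type) (s : seq I) (Q : pred I) (F : I -> KL) :
  (forall i, Q i -> X (F i)) -> X (\sum_(i <- s | Q i) F i).
Proof. by move=> XF; apply: big_ind => //; [apply: is_ideal0 | apply: is_idealD]. Qed.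

End IdealTheory.

Lemma is_ideal_same X Y : same X Y -> is_ideal Y -> is_ideal X.
Proof.
move=> XY [Y0 YD YM]; split; first by apply/XY.
- by move=> f g /XY Xf /XY Xg; apply/XY; apply: YD.
- by move=> r f /XY Xf; apply/XY; apply: YM.
Qed.

Lemma same_trans X Y Z : same X Y -> same Y Z -> same X Z.
Proof. by move=> XY YZ f; split => [/XY/YZ|/YZ/XY]. Qed.

Lemma ker_is_ideal (R : comNzRingType) (phi : {rmorphism KL -> R}) :
  is_ideal (fun f => phi f = 0).
Proof.
split; first by rewrite rmorph0.
- by move=> f g phif phig; rewrite rmorphD phif phig addr0.
- by move=> r f phif; rewrite rmorphM phif mulr0.
Qed.

Lemma ideal_gen_is_ideal S : is_ideal (ideal_gen S).
Proof.
split.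
- by exists 0%N, (fun _ => 0), (fun _ => 0); split => [[]|]; rewrite ?big_ord0.
- move=> f g [m1 [r1 [s1 [Ss1 ->]]]] [m2 [r2 [s2 [Ss2 ->]]]].
  pose glue (u1 : 'I_m1 -> KL) (u2 : 'I_m2 -> KL) (i : 'I_(m1 + m2)) :=
    match split i with inl j => u1 j | inr j => u2 j end.
  exists (m1 + m2)%N, (glue r1 r2), (glue s1 s2).
  split; first by move=> i; rewrite /glue; case: (split i).
  rewrite big_split_ord /glue; congr (_ + _); apply: eq_bigr => i _.
    by rewrite (unsplitK (inl i : 'I_m1 + 'I_m2)).
  by rewrite (unsplitK (inr i : 'I_m1 + 'I_m2)).
- move=> r f [m [r1 [s1 [Ss1 ->]]]]; exists m, (fun i => r * r1 i), s1.
  by split => //; rewrite mulr_sumr; apply: eq_bigr => i _; rewrite mulrA.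
Qed.

Lemma ideal_gen_sub S f : S f -> ideal_gen S f.
Proof.
by exists 1%N, (fun _ => 1), (fun _ => f); split => //; rewrite big_ord1 mul1r.
Qed.

Lemma ideal_gen_min S X : is_ideal X -> (forall f, S f -> X f) ->
  forall f, ideal_gen S f -> X f.
Proof.
move=> idealX SX f [m [r [s [Ss ->]]]].
by apply: (is_ideal_sum idealX) => i _; apply/(is_idealMl idealX)/SX.
Qed.

Lemma genR_is_ideal S : is_ideal (genR S).
Proof. exact: ideal_gen_is_ideal. Qed.

Lemma genR_sub S f : S f -> genR S f.
Proof. by move=> Sf; apply: ideal_gen_sub; right. Qed.

Lemma genR_I_L S f : I_L f -> genR S f.
Proof. by move=> If; apply: ideal_gen_sub; left. Qed.

Lemma genR_min S X : is_ideal X -> (forall f, I_L f -> X f) ->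
  (forall f, S f -> X f) -> forall f, genR S f -> X f.
Proof. by move=> idealX ILX SX; apply: ideal_gen_min => // f [/ILX|/SX]. Qed.

Lemma genR_mono S S' : (forall f, S f -> S' f) -> forall f, genR S f -> genR S' f.
Proof.
move=> SS'; apply: genR_min; [exact: genR_is_ideal | exact: genR_I_L |].
by move=> f /SS'; apply: genR_sub.
Qed.

Lemma genR_ext S S' : (forall f, S f <-> S' f) -> same (genR S) (genR S').
Proof. by move=> SS' f; split; apply: genR_mono => g /SS'. Qed.

Lemma genR_mulr X S f : is_ideal X -> (forall g, I_L g -> X g) ->
  (forall g, S g -> X (f * g)) -> forall g, genR S g -> X (f * g).
Proof.
move=> idealX ILX SX; apply: genR_min => [|g /ILX|//]; last exact: is_idealMl.
split; first by rewrite mulr0; apply: is_ideal0.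
- by move=> g h Xfg Xfh; rewrite mulrDr; apply: is_idealD.
- by move=> r g Xfg; rewrite mulrCA; apply: is_idealMl.
Qed.

Lemma genR_mul X S S' : is_ideal X -> (forall g, I_L g -> X g) ->
  (forall g h, S g -> S' h -> X (g * h)) ->
  forall g h, genR S g -> genR S' h -> X (g * h).
Proof.
move=> idealX ILX SS'X g h Sg S'h; rewrite mulrC.
apply: genR_mulr Sg => // g' S'g'; rewrite mulrC.
by apply: genR_mulr S'h => // h' S'h'; apply: SS'X.
Qed.

Definition hibi_rel (p q : L) : KL :=
  var p * var q - var (Order.join p q) * var (Order.meet p q).

Lemma I_L_is_ideal : is_ideal I_L.
Proof. exact: ideal_gen_is_ideal. Qed.

Lemma I_L_hibi_rel p q : I_L (hibi_rel p q).
Proof.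
have [|npq] := boolP (p >=< q)%O; last by apply: ideal_gen_sub; exists p, q.
case/orP => [pq|qp]; rewrite /hibi_rel.
- by rewrite (join_r pq) (meet_l pq) mulrC subrr; apply: is_ideal0 I_L_is_ideal.
- by rewrite (join_l qp) (meet_r qp) subrr; apply: is_ideal0 I_L_is_ideal.
Qed.

Lemma I_L_min X : is_ideal X -> (forall p q, X (hibi_rel p q)) ->
  forall f, I_L f -> X f.
Proof.
move=> idealX Xrel; apply: (ideal_gen_min idealX) => f [p [q [_ ->]]].
exact: Xrel.
Qed.

Lemma poset_idealR_is_ideal J : is_ideal (P J).
Proof. exact: genR_is_ideal. Qed.

Lemma poset_idealR_var J b : b \in J -> P J (var b).
Proof. by move=> bJ; apply: genR_sub; exists b. Qed.

Lemma poset_idealR_I_L J f : I_L f -> P J f.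
Proof. exact: genR_I_L. Qed.

Lemma poset_idealR_mono J J' : J \subset J' -> forall f, P J f -> P J' f.
Proof. by move=> /subsetP JJ'; apply: genR_mono => f [c /JJ' cJ' ->]; exists c. Qed.

(* Evaluation at the indicator vector of the interval [[u, t]]; intervals are
   sublattices, which is why it kills the Hibi relations. *)
Definition interval_eval (u t : L) : {rmorphism KL -> K} :=
  meval (fun i => ((u <= enum_val i)%O && (enum_val i <= t)%O)%:R).

Lemma interval_eval_var u t b :
  interval_eval u t (var b) = ((u <= b)%O && (b <= t)%O)%:R.
Proof. by rewrite /= /var mevalXU enum_rankK. Qed.

Lemma interval_eval_I_L u t f : I_L f -> interval_eval u t f = 0.
Proof.
apply: (I_L_min (ker_is_ideal _)) => p q.
rewrite rmorphB !rmorphM !interval_eval_var -!natrM !mulnb.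
suff -> : ((u <= p <= t) && (u <= q <= t))%O =
          ((u <= Order.join p q <= t) && (u <= Order.meet p q <= t))%O.
  by rewrite subrr.
rewrite leUx lexI; apply/idP/idP.
  move=> /andP[/andP[up pt] /andP[uq qt]]; rewrite pt qt up uq /=.
  by rewrite (le_trans up (leUl _ _)) (le_trans (leIl _ _) pt).
by move=> /andP[/andP[_ /andP[pt qt]] /andP[/andP[up uq] _]]; rewrite up pt uq qt.
Qed.

Lemma interval_eval_poset_idealR u t J f :
  (forall c, c \in J -> ~~ ((u <= c)%O && (c <= t)%O)) ->
  P J f -> interval_eval u t f = 0.
Proof.
move=> J_out; apply: (genR_min (ker_is_ideal _)); first exact: interval_eval_I_L.
by move=> g [c cJ ->]; rewrite interval_eval_var (negbTE (J_out c cJ)).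
Qed.

Lemma var_poset_idealR J b : P J (var b) -> b \in J.
Proof.
move=> Pb; apply/negPn/negP => bJ.
suff : interval_eval b b (var b) = 0.
  by rewrite interval_eval_var lexx => /eqP; rewrite oner_eq0.
apply: interval_eval_poset_idealR Pb => c cJ; apply: contraNN bJ => /andP[bc cb].
by have -> : b = c by apply/le_anti; rewrite bc cb.
Qed.

Lemma poset_idealR_set0 : same (P set0) zeroR.
Proof. by apply: genR_ext => f; split => [[b]|//]; rewrite inE. Qed.

Lemma poset_idealR_setT : same (P setT) (@maxR K disp L).
Proof. by apply: genR_ext => f; split => [[b _ ->]|[b ->]]; exists b. Qed.

Lemma var_notin_zeroR b : ~ zeroR (var b).
Proof. by move=> /poset_idealR_set0/var_poset_idealR; rewrite inE. Qed.

Definition not_above (a : L) : {set L} := [set b | ~~ (a <= b)%O].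

Lemma interval_eval_not_above o s t f : (o <= s)%O ->
  P (not_above o) f -> interval_eval s t f = 0.
Proof.
move=> os; apply: interval_eval_poset_idealR => c; rewrite inE.
by apply: contraNN => /andP[sc _]; apply: le_trans sc.
Qed.

Lemma poset_idealR_Mvar_not_above J o b : (forall c, c \in J -> ~~ (o <= c)%O) ->
  P J (var b * var o) -> ~~ (o <= b)%O.
Proof.
move=> J_not_above Pbo; apply/negP => ob.
suff : interval_eval o b (var b * var o) = 0.
  by rewrite rmorphM !interval_eval_var ob !lexx mulr1 => /eqP; rewrite oner_eq0.
by apply: interval_eval_poset_idealR Pbo => c /J_not_above /negbTE ->.
Qed.

(** * Koszul filtrations by poset ideals force cancellativity *)

Section CancellationWitness.
Variables u v w : L.
Hypotheses (uv_meet : Order.meet u w = Order.meet v w)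
           (uv_join : Order.join u w = Order.join v w) (u_neq_v : u != v).
Let o := Order.meet u w.
Let t := Order.join u w.

Lemma witness_Mvar_I_L : I_L (var t * (var u - var v) * var o).
Proof.
have -> : var t * (var u - var v) * var o =
          var v * hibi_rel u w - var u * hibi_rel v w.
  by rewrite /hibi_rel -uv_meet -uv_join -/o -/t; ring.
exact: (is_idealB I_L_is_ideal (is_idealMl I_L_is_ideal _ (I_L_hibi_rel u w))
                               (is_idealMl I_L_is_ideal _ (I_L_hibi_rel v w))).
Qed.

Lemma witness_not_above : ~ P (not_above o) (var t * (var u - var v)).
Proof.
have u_t : (u <= t)%O by apply: leUl.
have v_t : (v <= t)%O by rewrite /t uv_join leUl.
have o_u : (o <= u)%O by apply: leIl.
have o_v : (o <= v)%O by rewrite /o uv_meet leIl.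
have [uv|nuv] := boolP (u <= v)%O.
- have nvu : ~~ (v <= u)%O.
    by apply: contraNN u_neq_v => vu; apply/eqP/le_anti; rewrite uv vu.
  move=> /(interval_eval_not_above t o_v).
  rewrite rmorphM rmorphB !interval_eval_var v_t u_t (negbTE nvu) !lexx /=.
  by rewrite mul1r sub0r => /eqP; rewrite oppr_eq0 oner_eq0.
- move=> /(interval_eval_not_above t o_u).
  rewrite rmorphM rmorphB !interval_eval_var v_t u_t (negbTE nuv) !lexx /=.
  by rewrite mul1r subr0 => /eqP; rewrite oner_eq0.
Qed.

End CancellationWitness.

Definition const_coef : {rmorphism KL -> K} := mcoeff 0.

Lemma const_coef_var b : const_coef (var b) = 0.
Proof. by rewrite /= /var mcoeffX mnm1_eq0. Qed.

Lemma const_coef_I_L f : I_L f -> const_coef f = 0.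
Proof.
apply: (I_L_min (ker_is_ideal _)) => p q.
by rewrite rmorphB !rmorphM !const_coef_var !mulr0 subrr.
Qed.

Lemma const_coef_poset_idealR J f : P J f -> const_coef f = 0.
Proof.
apply: (genR_min (ker_is_ideal _)); first exact: const_coef_I_L.
by move=> g [c _ ->]; apply: const_coef_var.
Qed.

Definition lin_coef (c : L) (f : KL) : K := (mderiv (enum_rank c) f)@_0.

Lemma lin_coefD c f g : lin_coef c (f + g) = lin_coef c f + lin_coef c g.
Proof. by rewrite /lin_coef mderivD mcoeffD. Qed.

Lemma lin_coefM c f g :
  lin_coef c (f * g) = lin_coef c f * const_coef g + const_coef f * lin_coef c g.
Proof. by rewrite /lin_coef mderivM mcoeffD /= !rmorphM. Qed.

Lemma lin_coef_var c b : lin_coef c (var b) = (b == c)%:R.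
Proof.
rewrite /lin_coef /var mderivX mcoeffZ mcoeffX mnm1E (inj_eq enum_rank_inj).
have [->|_] := eqVneq b c; last by rewrite mul0r.
suff -> : (U_(enum_rank c) - U_(enum_rank c) = 0)%MM by rewrite eqxx mulr1.
by apply/mnmP => k; rewrite mnmBE subnn mnm0E.
Qed.

Lemma lin_coef0 c : lin_coef c 0 = 0.
Proof. by rewrite /lin_coef mderiv0 mcoeff0. Qed.

Lemma lin_coefB c f g : lin_coef c (f - g) = lin_coef c f - lin_coef c g.
Proof. by rewrite /lin_coef mderivB mcoeffB. Qed.

(* [C / D] is cyclic, so its degree-one part is at most one-dimensional,
   while the [var c], [c \in J :\: J2], are independent there. *)
Lemma cyclic_quot_poset_idealR J J2 C D : same C (P J) -> same D (P J2) ->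
  cyclic_quot C D -> {in J :\: J2 &, forall c1 c2, c1 = c2}.
Proof.
move=> CJ DJ2 [g [Cg C_gen]] c1 c2 /setDP[c1J c1J2] /setDP[c2J c2J2].
pose Y f := const_coef f = 0 /\ exists rho,
  lin_coef c1 f = rho * lin_coef c1 g /\ lin_coef c2 f = rho * lin_coef c2 g.
have Y0 f : const_coef f = 0 -> lin_coef c1 f = 0 -> lin_coef c2 f = 0 -> Y f.
  by move=> f0 f1 f2; split => //; exists 0; rewrite f1 f2 !mul0r.
have idealY : is_ideal Y.
  split; first by apply: Y0; rewrite ?rmorph0 ?lin_coef0.
  - move=> f h [f0 [r1 [f1 f2]]] [h0 [r2 [h1 h2]]].
    split; first by rewrite rmorphD f0 h0 addr0.
    by exists (r1 + r2); rewrite !lin_coefD f1 f2 h1 h2 !mulrDl.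
  - move=> r f [f0 [rho [f1 f2]]]; split; first by rewrite rmorphM f0 mulr0.
    by exists (const_coef r * rho); rewrite !lin_coefM f0 f1 f2 !mulr0 !add0r !mulrA.
have Y_I_L f : I_L f -> Y f.
  apply: (I_L_min idealY) => p q.
  by apply: Y0; [exact/const_coef_I_L/I_L_hibi_rel | |];
     rewrite lin_coefB !lin_coefM !const_coef_var !mulr0 !mul0r !addr0 subrr.
have Y_C f : C f -> Y f.
  move=> /C_gen; apply: (genR_min idealY Y_I_L) => h [/DJ2|->]; last first.
    by split; [exact/(const_coef_poset_idealR (J := J))/CJ | exists 1; rewrite !mul1r].
  apply: (genR_min idealY Y_I_L) => _ [b bJ2 ->].
  have [b_c1 b_c2] : b != c1 /\ b != c2.
    by split; apply: contraTneq bJ2 => ->.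
  by apply: Y0; rewrite ?const_coef_var // lin_coef_var ?(negbTE b_c1) ?(negbTE b_c2).
have C_var c : c \in J -> C (var c) by move=> cJ; apply/CJ/poset_idealR_var.
have [//|c1_neq_c2] := eqVneq c1 c2; exfalso.
have [_ [r1 []]] := Y_C _ (C_var _ c1J).
rewrite !lin_coef_var eqxx (negbTE c1_neq_c2) => g1 /esym/eqP.
have [_ [r2 []]] := Y_C _ (C_var _ c2J).
rewrite !lin_coef_var eqxx => _ g2.
rewrite mulf_eq0 => /orP[/eqP r1_0|/eqP g2_0].
  by move: g1; rewrite r1_0 mul0r => /eqP; rewrite oner_eq0.
by move: g2; rewrite g2_0 mulr0 => /eqP; rewrite oner_eq0.
Qed.

Section KoszulPosetFiltration.
Variable F : (KL -> Prop) -> Prop.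
Hypotheses (kF : koszul_filtration F)
           (F_poset : forall I, F I -> exists J, poset_ideal J /\ same I (P J)).
Variables (o : L) (f : KL).
Hypothesis fo_I_L : I_L (f * var o).

Lemma colon_witness J J2 C D : same C (P J) -> same D (P J2) ->
  cyclic_quot C D -> o \in J -> o \notin J2 -> colon D C f.
Proof.
move=> CJ DJ2 cycCD oJ oJ2 g /CJ.
have idealD : is_ideal D := is_ideal_same DJ2 (poset_idealR_is_ideal J2).
apply: (genR_mulr idealD) => [h /(poset_idealR_I_L J2)/DJ2 //|_ [c cJ ->]].
have [cJ2|cJ2] := boolP (c \in J2).
  by apply: is_idealMl => //; apply/DJ2/poset_idealR_var.
have -> : c = o by apply: (cyclic_quot_poset_idealR CJ DJ2 cycCD); apply/setDP.
exact/DJ2/poset_idealR_I_L.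
Qed.

Lemma colon_sub_not_above J2 C D N : same D (P J2) -> poset_ideal J2 ->
  o \notin J2 -> C (var o) -> same (colon D C) (P N) -> N \subset not_above o.
Proof.
move=> DJ2 J2_ideal oJ2 Co colonN; apply/subsetP => b bN; rewrite inE.
have /colonN /(_ _ Co) /DJ2 := poset_idealR_var bN.
apply: poset_idealR_Mvar_not_above => c cJ2.
by apply: contraNN oJ2 => oc; apply: J2_ideal oc cJ2.
Qed.

Lemma koszul_poset_descent J C : F C -> same C (P J) -> o \in J ->
  P (not_above o) f \/
  exists J' C', [/\ F C', same C' (P J'), o \in J' & (#|J'| < #|J|)%N].
Proof.
move=> FC CJ oJ; have [_ _ F_step] := kF.
have Co : C (var o) by apply/CJ/poset_idealR_var.
have [|D [FD [DC [cycCD [E [FE ED]]]]]] := F_step C FC.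
  by move=> /(_ (var o))/iffLR/(_ Co); apply: var_notin_zeroR.
have [J2 [J2_ideal DJ2]] := F_poset FD.
have [N [_ EN]] := F_poset FE.
have colonN : same (colon D C) (P N).
  by move=> h; split => [/ED/EN|/EN/ED].
have J2J : J2 \subset J.
  by apply/subsetP => b /poset_idealR_var /DJ2 /DC /CJ /var_poset_idealR.
have [oJ2|oJ2] := boolP (o \in J2); [right | left].
  exists J2, D; split => //; apply: proper_card; rewrite properEneq J2J andbT.
  apply: contraTneq isT => J2_eq_J.
  have : colon D C 1 by move=> g /CJ; rewrite mul1r -J2_eq_J => /DJ2.
  by move=> /colonN /const_coef_poset_idealR /eqP; rewrite rmorph1 oner_eq0.
apply: (poset_idealR_mono (colon_sub_not_above DJ2 J2_ideal oJ2 Co colonN)).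
exact/colonN/(colon_witness CJ DJ2).
Qed.

Lemma koszul_poset_colon_var : P (not_above o) f.
Proof.
suff descent J C : F C -> same C (P J) -> o \in J -> P (not_above o) f.
  have [_ [_ [Cmax [FCmax CmaxL]]] _] := kF.
  have [J [_ CmaxJ]] := F_poset FCmax.
  apply: (descent J Cmax) => //; apply/var_poset_idealR/CmaxJ/CmaxL.
  by apply: genR_sub; exists o.
move Hk : #|J| => k; elim/ltn_ind: k J C Hk => k IH J C Hk FC CJ oJ.
have [//|[J' [C' [FC' C'J' oJ' ltJ]]]] := koszul_poset_descent FC CJ oJ.
by apply: (IH #|J'| _ J' C'); rewrite -?Hk.
Qed.

End KoszulPosetFiltration.

Lemma koszul_poset_cancellative F : koszul_filtration F ->
  (forall I, F I -> exists J, poset_ideal J /\ same I (P J)) -> cancellative L.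
Proof.
move=> kF F_poset u v w uv_meet uv_join.
have [//|u_neq_v] := eqVneq u v; exfalso.
apply: (witness_not_above uv_meet uv_join u_neq_v).
exact: koszul_poset_colon_var kF F_poset _ _ (witness_Mvar_I_L uv_meet uv_join).
Qed.

(** * Straightening and the Hibi embedding *)

Definition monomial (s : seq L) : KL := \prod_(b <- s) var b.

Definition monomial_exp (s : seq L) : 'X_{1..#|L|} := (\sum_(b <- s) U_(enum_rank b))%MM.

Lemma monomialE s : monomial s = 'X_[monomial_exp s].
Proof.
elim: s => [|b s IH]; first by rewrite /monomial /monomial_exp !big_nil mpolyX0.
by rewrite /monomial /monomial_exp !big_cons mpolyXD -/(monomial s) IH.
Qed.

Lemma monomial_exp_count s b : monomial_exp s (enum_rank b) = count_mem b s.
Proof.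
elim: s => [|c s IH]; first by rewrite /monomial_exp big_nil mnm0E.
rewrite /monomial_exp big_cons mnmDE -/(monomial_exp s) IH mnm1E.
by rewrite (inj_eq enum_rank_inj).
Qed.

Lemma monomial_exp_perm s s' : monomial_exp s = monomial_exp s' -> perm_eq s s'.
Proof.
by move=> /mnmP ss'; apply/allP => b _ /=; rewrite -!monomial_exp_count ss'.
Qed.

Definition mnm_seq (m : 'X_{1..#|L|}) : seq L :=
  flatten [seq nseq (m i) (enum_val i) | i <- enum 'I_#|L|].

Lemma mpolyX_monomial m : 'X_[m] = monomial (mnm_seq m).
Proof.
rewrite mpolyXE_id /monomial /mnm_seq big_flatten /= big_map big_enum /=.
apply: eq_bigr => i _; rewrite big_nseq /var enum_valK.
by elim: (m i) => //= k <-; rewrite exprS.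
Qed.

(* Straightening with the Hibi relations: [var x * var c] is replaced by
   [var (x `|` c) * var (x `&` c)], keeping the sequence a decreasing chain. *)
Fixpoint chain_insert (x : L) (s : seq L) : seq L :=
  if s is c :: r then Order.join x c :: chain_insert (Order.meet x c) r else [:: x].

Definition chain_of (s : seq L) : seq L := foldr chain_insert [::] s.

Lemma all_le_chain_insert y x s : (x <= y)%O -> all (<= y)%O s ->
  all (<= y)%O (chain_insert x s).
Proof.
elim: s x => [|c s IH] x xy /=; first by rewrite xy.
move=> /andP[cy sy]; rewrite leUx xy cy /=.
by apply: IH => //; apply: le_trans (leIl _ _) xy.
Qed.

Lemma all_ge_chain_insert a x s : (a <= x)%O -> all (>= a)%O s ->
  all (>= a)%O (chain_insert x s).
Proof.
elim: s x => [|c s IH] x ax /=; first by rewrite ax.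
move=> /andP[ac sa]; rewrite (le_trans ax (leUl _ _)) /=.
by apply: IH => //; rewrite lexI ax ac.
Qed.

Lemma sorted_chain_insert x s : sorted >=%O s -> sorted >=%O (chain_insert x s).
Proof.
elim: s x => [|c s IH] x //=; rewrite !(path_sortedE ge_trans) => /andP[s_c s_sorted].
rewrite IH // andbT; apply: all_le_chain_insert.
  exact: le_trans (leIl _ _) (leUl _ _).
by apply/allP => z zs; apply: le_trans (allP s_c z zs) (leUr _ _).
Qed.

Lemma sorted_chain_of s : sorted >=%O (chain_of s).
Proof. by elim: s => //= b s IH; apply: sorted_chain_insert. Qed.

Lemma all_ge_chain_of a s : all (>= a)%O s -> all (>= a)%O (chain_of s).
Proof.
by elim: s => //= b s IH /andP[ab sa]; apply: all_ge_chain_insert => //; apply: IH.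
Qed.

Lemma I_L_monomial_chain_insert x s :
  I_L (var x * monomial s - monomial (chain_insert x s)).
Proof.
elim: s x => [|c s IH] x.
  by rewrite /monomial big_cons !big_nil subrr; apply: is_ideal0 I_L_is_ideal.
rewrite /monomial /= !big_cons -!/(monomial _).
have -> : var x * (var c * monomial s) -
          var (Order.join x c) * monomial (chain_insert (Order.meet x c) s) =
          hibi_rel x c * monomial s + var (Order.join x c) *
            (var (Order.meet x c) * monomial s -
             monomial (chain_insert (Order.meet x c) s)).
  by rewrite /hibi_rel; ring.
apply: (is_idealD I_L_is_ideal); last exact: (is_idealMl I_L_is_ideal _ (IH _)).
exact: (is_idealMr I_L_is_ideal _ (I_L_hibi_rel x c)).
Qed.

Lemma I_L_monomial_chain_of s : I_L (monomial s - monomial (chain_of s)).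
Proof.
elim: s => [|b s IH]; first by rewrite subrr; apply: is_ideal0 I_L_is_ideal.
rewrite /= {1}/monomial big_cons -/(monomial s).
have -> : var b * monomial s - monomial (chain_insert b (chain_of s)) =
          var b * (monomial s - monomial (chain_of s)) +
          (var b * monomial (chain_of s) - monomial (chain_insert b (chain_of s))).
  by ring.
apply: (is_idealD I_L_is_ideal); last exact: I_L_monomial_chain_insert.
exact: (is_idealMl I_L_is_ideal _ IH).
Qed.

Section HibiEmbedding.
Variable a : L.
Local Notation n := #|L|.

(* The Hibi embedding of the interval [[a, 1]], with the variables outside it
   sent to 0: [var b] goes to the monomial in the join-primes below [b], times
   the variable indexed by [a], which records the degree. *)
Definition hibi_exp (b : L) : 'X_{1..n} :=
  [multinom ((enum_val j == a) || join_prime (enum_val j) && (enum_val j <= b)%O : nat)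
  | j < n].

Definition hibi_exp_seq (s : seq L) : 'X_{1..n} := (\sum_(b <- s) hibi_exp b)%MM.

Definition hibi_embed : {rmorphism KL -> KL} :=
  mmap (@mpolyC n K)
       (fun i => if (a <= enum_val i)%O then 'X_[hibi_exp (enum_val i)] else 0).

Lemma hibi_embed_var b :
  hibi_embed (var b) = if (a <= b)%O then 'X_[hibi_exp b] else 0.
Proof. by rewrite /= /var mmapX mmap1U enum_rankK. Qed.

Lemma hibi_embedZ (c : K) f : hibi_embed (c *: f) = c *: hibi_embed f.
Proof. by rewrite /= mmapZ /= mul_mpolyC. Qed.

Lemma hibi_embed_monomial s : all (>= a)%O s ->
  hibi_embed (monomial s) = 'X_[hibi_exp_seq s].
Proof.
elim: s => [|b s IH]; first by rewrite /monomial /hibi_exp_seq !big_nil rmorph1 mpolyX0.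
move=> /andP[ab sa]; rewrite /monomial /hibi_exp_seq !big_cons rmorphM.
by rewrite hibi_embed_var ab mpolyXD -/(monomial s) IH.
Qed.

Lemma hibi_exp_join_meet p q :
  (hibi_exp p + hibi_exp q = hibi_exp (Order.join p q) + hibi_exp (Order.meet p q))%MM.
Proof.
apply/mnmP => j; rewrite !mnmDE !mnmE.
case: (enum_val j == a) => //=; case j_prime: (join_prime (enum_val j)) => //=.
rewrite (join_primeP _ _ j_prime) lexI.
by case: (enum_val j <= p)%O; case: (enum_val j <= q)%O.
Qed.

Lemma hibi_embed_I_L f : I_L f -> hibi_embed f = 0.
Proof.
apply: (I_L_min (ker_is_ideal _)) => p q.
rewrite rmorphB !rmorphM !hibi_embed_var lexI.
case ap: (a <= p)%O; case aq: (a <= q)%O; rewrite ?mul0r ?mulr0 ?subrr //=.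
by rewrite (le_trans ap (leUl _ _)) -!mpolyXD hibi_exp_join_meet subrr.
Qed.

Lemma hibi_embed_not_above f : P (not_above a) f -> hibi_embed f = 0.
Proof.
apply: (genR_min (ker_is_ideal _)); first exact: hibi_embed_I_L.
by move=> g [b]; rewrite inE => /negbTE a_b ->; rewrite hibi_embed_var a_b.
Qed.

Lemma hibi_exp_seq_degree s : hibi_exp_seq s (enum_rank a) = size s.
Proof.
rewrite /hibi_exp_seq mnm_sumE -sum1_size; apply: eq_bigr => b _.
by rewrite mnmE enum_rankK eqxx.
Qed.

Lemma hibi_exp_seq_join_prime s p : join_prime p -> p != a ->
  hibi_exp_seq s (enum_rank p) = count (>= p)%O s.
Proof.
move=> p_prime p_a; elim: s => [|b s IH]; first by rewrite /hibi_exp_seq big_nil mnm0E.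
rewrite /hibi_exp_seq big_cons mnmDE -/(hibi_exp_seq s) IH mnmE enum_rankK.
by rewrite (negbTE p_a) p_prime.
Qed.

(* The normal form of [f] modulo [P (not_above a)]: monomials with a
   variable outside [[a, 1]] are dropped, the others are straightened. *)
Definition standard_part (f : KL) : KL :=
  \sum_(m <- msupp f | all (>= a)%O (mnm_seq m))
     f@_m *: monomial (chain_of (mnm_seq m)).

Lemma standard_part_congr f : P (not_above a) (f - standard_part f).
Proof.
have idealN := poset_idealR_is_ideal (not_above a).
rewrite {1}(mpolyE f) /standard_part [X in _ - X]big_mkcond /= -sumrB.
apply: (is_ideal_sum idealN) => m _; rewrite mpolyX_monomial.
case: ifP => [_|/negbT/allPn[b b_m a_b]].
  by rewrite -scalerBr; apply/(is_idealZ idealN)/poset_idealR_I_L/I_L_monomial_chain_of.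
rewrite subr0 /monomial (perm_big _ (perm_to_rem b_m)) big_cons.
by apply/(is_idealZ idealN)/(is_idealMr idealN)/poset_idealR_var; rewrite inE.
Qed.

Hypothesis Ldistr : distributive_lattice L.

Lemma hibi_exp_seq_head x s x' s' : sorted >=%O (x :: s) -> sorted >=%O (x' :: s') ->
  all (>= a)%O (x' :: s') -> hibi_exp_seq (x :: s) = hibi_exp_seq (x' :: s') ->
  (x <= x')%O.
Proof.
move=> sorted_x sorted_x' a_x' exp_eq; apply: join_prime_le => // p p_prime p_x.
have [->|p_a] := eqVneq p a; first by case/andP: a_x'.
have : has (>= p)%O (x' :: s').
  by rewrite has_count -hibi_exp_seq_join_prime // -exp_eq hibi_exp_seq_join_prime //
       -has_count /= p_x.
move: sorted_x'; rewrite /= (path_sortedE ge_trans) => /andP[x'_top _].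
by case/orP => // /hasP[y ys py]; apply: le_trans py (allP x'_top y ys).
Qed.

Lemma hibi_exp_seq_inj s s' : sorted >=%O s -> sorted >=%O s' ->
  all (>= a)%O s -> all (>= a)%O s' -> hibi_exp_seq s = hibi_exp_seq s' -> s = s'.
Proof.
elim: s s' => [|b s IH] [|b' s'] //;
  try by move=> _ _ _ _ /mnmP/(_ (enum_rank a)); rewrite !hibi_exp_seq_degree.
move=> sorted_s sorted_s' a_s a_s' exp_eq.
have bb' : b = b'.
  by apply/le_anti; rewrite (hibi_exp_seq_head sorted_s sorted_s' a_s' exp_eq)
    (hibi_exp_seq_head sorted_s' sorted_s a_s (esym exp_eq)).
subst b'; congr (_ :: _); apply: IH.
- exact: path_sorted sorted_s.
- exact: path_sorted sorted_s'.
- by case/andP: a_s.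
- by case/andP: a_s'.
apply/mnmP => j; move/mnmP: exp_eq => /(_ j).
by rewrite /hibi_exp_seq !big_cons !mnmDE; apply: addnI.
Qed.

Lemma hibi_exp_seq_eq s s' : sorted >=%O s -> sorted >=%O s' ->
  all (>= a)%O s -> all (>= a)%O s' ->
  (hibi_exp_seq s == hibi_exp_seq s') = (monomial_exp s == monomial_exp s').
Proof.
move=> sorted_s sorted_s' a_s a_s'.
apply/eqP/eqP => [/hibi_exp_seq_inj -> // | /monomial_exp_perm ss'].
by rewrite /hibi_exp_seq (perm_big _ ss').
Qed.

Lemma standard_part_eq0 f : hibi_embed (standard_part f) = 0 -> standard_part f = 0.
Proof.
pose good m := all (>= a)%O (mnm_seq m).
pose ch m := chain_of (mnm_seq m).
move=> embed0; apply/mpolyP => mu; rewrite mcoeff0.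
have -> : (standard_part f)@_mu =
          \sum_(m <- msupp f | good m) f@_m * (monomial_exp (ch m) == mu)%:R.
  rewrite /standard_part raddf_sum; apply: eq_bigr => m _.
  by rewrite /= mcoeffZ monomialE mcoeffX.
have [/hasP[m0 _ /andP[good_m0 /eqP <-]]|/hasPn none] :=
  boolP (has (fun m => good m && (monomial_exp (ch m) == mu)) (msupp f)); last first.
  rewrite big_seq_cond big1 // => m /andP[mf good_m].
  by have := none m mf; rewrite good_m /= => /negbTE ->; rewrite mulr0.
have := congr1 (mcoeff (hibi_exp_seq (ch m0))) embed0.
rewrite mcoeff0 /standard_part rmorph_sum raddf_sum => embed_coef.
rewrite -[RHS]embed_coef; apply: eq_bigr => m good_m.
rewrite hibi_embedZ hibi_embed_monomial ?all_ge_chain_of // /= mcoeffZ mcoeffX.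
by rewrite hibi_exp_seq_eq ?sorted_chain_of ?all_ge_chain_of.
Qed.

Lemma not_above_colon_var f : P (not_above a) (f * var a) -> P (not_above a) f.
Proof.
move=> Pfa; have Pstd := standard_part_congr f.
have embed_f : hibi_embed f = 0.
  have := hibi_embed_not_above Pfa; rewrite rmorphM hibi_embed_var lexx => /eqP.
  rewrite mulf_eq0 => /orP[/eqP //|/eqP/(congr1 (mcoeff (hibi_exp a)))].
  by rewrite mcoeffX eqxx mcoeff0 => /eqP; rewrite oner_eq0.
suff std0 : standard_part f = 0 by move: Pstd; rewrite std0 subr0.
apply: standard_part_eq0; have := hibi_embed_not_above Pstd.
by rewrite rmorphB embed_f sub0r => /eqP; rewrite oppr_eq0 => /eqP.
Qed.

End HibiEmbedding.

(** * The poset ideals of a distributive lattice *)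

Lemma poset_ideal_not_above a : poset_ideal (not_above a).
Proof. by move=> x y xy; rewrite !inE; apply: contraNN => ax; apply: le_trans ax xy. Qed.

Lemma poset_ideal_setD1_max J a : poset_ideal J ->
  (forall b, b \in J -> (a <= b)%O -> b = a) -> poset_ideal (J :\ a).
Proof.
move=> J_ideal a_max x y xy; rewrite !inE => /andP[y_a yJ].
rewrite (J_ideal x y xy yJ) andbT; apply: contraNneq y_a => xa.
by apply/eqP/a_max => //; rewrite -xa.
Qed.

Lemma poset_idealR_setD1 J a : a \in J ->
  same (P J) (genR (fun f => P (J :\ a) f \/ f = var a)).
Proof.
move=> aJ f; split.
- apply: (genR_min (genR_is_ideal _)); first exact: genR_I_L.
  move=> _ [b bJ ->]; apply: genR_sub; have [->|ba] := eqVneq b a; [right | left] => //.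
  by apply: poset_idealR_var; rewrite !inE ba.
- apply: (genR_min (poset_idealR_is_ideal J)); first exact: poset_idealR_I_L.
  move=> g [|->]; last exact: poset_idealR_var.
  by apply: poset_idealR_mono; apply: subsetDl.
Qed.

Lemma poset_idealR_mul_not_above J a : poset_ideal J -> a \in J ->
  forall g h, P (not_above a) g -> P J h -> P (J :\ a) (g * h).
Proof.
move=> J_ideal aJ; have idealJa := poset_idealR_is_ideal (J :\ a).
apply: (genR_mul idealJa); first exact: poset_idealR_I_L.
move=> _ _ [b b_a ->] [c cJ ->].
have [->|ca] := eqVneq c a; last first.
  by apply/(is_idealMl idealJa)/poset_idealR_var; rewrite !inE ca cJ.
have -> : var b * var a = hibi_rel b a + var (Order.join b a) * var (Order.meet b a).
  by rewrite /hibi_rel subrK.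
apply: (is_idealD idealJa); first exact/poset_idealR_I_L/I_L_hibi_rel.
apply/(is_idealMl idealJa)/poset_idealR_var.
rewrite !inE (J_ideal _ a (leIr _ _) aJ) andbT.
by apply: contraTneq b_a => ba_a; rewrite inE negbK -ba_a leIl.
Qed.

Lemma colon_poset_idealR_setD1 J a : distributive_lattice L -> poset_ideal J ->
  a \in J -> (forall b, b \in J -> (a <= b)%O -> b = a) ->
  same (colon (P (J :\ a)) (P J)) (P (not_above a)).
Proof.
move=> Ldistr J_ideal aJ a_max f; split => [colon_f | Pf g Pg].
  apply: (not_above_colon_var Ldistr).
  apply: poset_idealR_mono (colon_f _ (poset_idealR_var aJ)).
  apply/subsetP => b; rewrite !inE => /andP[ba bJ]; apply: contra ba => ab.
  exact/eqP/a_max.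
exact: poset_idealR_mul_not_above.
Qed.

Lemma poset_idealR_linear J : gen_by_linear_forms (P J).
Proof.
exists (fun f => exists2 a, a \in J & f = var a); split => [_ [b _ ->]|//].
exists (fun c => (c == b)%:R); rewrite (bigD1 b) //= eqxx scale1r big1 ?addr0 //.
by move=> c /negbTE ->; rewrite scale0r.
Qed.

Theorem distributive_koszul_filtration :
  distributive_lattice L -> koszul_filtration (@all_poset_idealsR K disp L).
Proof.
move=> Ldistr; split.
- move=> I [J [_ IJ]]; have [S [S_lin JS]] := poset_idealR_linear J.
  by exists S; split => //; apply: same_trans IJ JS.
- split; [exists (P set0) | exists (P setT)]; split;
    try exact: poset_idealR_set0; try exact: poset_idealR_setT.
  + by exists set0; split => // x y _; rewrite inE.
  + by exists setT; split => // x y _; rewrite inE.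
move=> I [J [J_ideal IJ]] I_nz.
have [x xJ] : exists x, x \in J.
  have [J0|[y yJ]] := set_0Vmem J; last by exists y.
  exfalso; apply: I_nz.
  by apply: same_trans IJ _; rewrite J0; apply: poset_idealR_set0.
have [a aJ a_max] := exists_maximal xJ.
have colonJ := colon_poset_idealR_setD1 Ldistr J_ideal aJ a_max.
exists (P (J :\ a)); split.
  by exists (J :\ a); split; first exact: poset_ideal_setD1_max.
split; first by move=> f /(poset_idealR_mono (subsetDl J [set a])) /IJ.
split.
  exists (var a); split; first exact/IJ/poset_idealR_var.
  exact: same_trans IJ (poset_idealR_setD1 aJ).
exists (P (not_above a)); split.
  by exists (not_above a); split; first exact: poset_ideal_not_above.
move=> f; split => [/colonJ colon_f g /IJ | colon_f]; first exact: colon_f.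
by apply/colonJ => g /IJ; apply: colon_f.
Qed.

End HibiRing.

Theorem theorem2p1 (K : fieldType) (d : Order.disp_t) (L : finLatticeType d) :
  (distributive_lattice L <-> koszul_filtration (@all_poset_idealsR K d L)) /\
  (koszul_filtration (@all_poset_idealsR K d L) <->
     exists F : (KL K L -> Prop) -> Prop,
       koszul_filtration F /\
       (forall I, F I -> exists J, poset_ideal J /\ same I (@poset_idealR K d L J))).
Proof.
have poset_koszul_distributive : (exists F : (KL K L -> Prop) -> Prop,
    koszul_filtration F /\
    (forall I, F I -> exists J, poset_ideal J /\ same I (@poset_idealR K d L J))) ->
    distributive_lattice L.
  move=> [F [kF F_poset]].
  exact: cancellative_distributive (koszul_poset_cancellative kF F_poset).
split; split.
- exact: distributive_koszul_filtration.
- by move=> kF; apply: poset_koszul_distributive; exists (@all_poset_idealsR K d L).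
- by move=> kF; exists (@all_poset_idealsR K d L).
- by move=> /poset_koszul_distributive/distributive_koszul_filtration.
Qed.
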